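(* Let $\theta_i>0$, $m_i>0$, $\sigma>0$, $p>0$, $M=\sum_i m_i$, and define $\mathbb F:\mathbb R^N_+\to\mathbb R^N$ by $$\mathbb F(\mathbf y)_i=My_i-\sum_{k=1}^N m_ky_k-\sigma(\theta_i-y_i^p)y_i .$$ If $\mathbf y\in\mathbb R^N_+$ satisfies $\mathbb F(\mathbf y)=0$, then $d_i:=M+\sigma(p+1)y_i^p-\sigma\theta_i>0$ for all $i$, and the Jacobian matrix $D\mathbb F(\mathbf y)=\operatorname{diag}(d_1,\dots,d_N)-\mathbf 1\mathbf m^T$ (where $\mathbf 1=(1,\dots,1)^T$, $\mathbf m=(m_1,\dots,m_N)^T$) has all leading principal minors positive; in particular $\det D\mathbb F(\mathbf y)=\prod_i d_i\,\big(1-\sum_k m_k/d_k\big)>0$.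
   Context: $\mathbb R^N_+$ denotes the set of vectors with all coordinates strictly positive. *)

From HB Require Import structures.
From mathcomp Require Import all_boot all_order all_algebra.
From mathcomp Require Import all_classical all_reals all_analysis.
Set Implicit Arguments. Unset Strict Implicit. Unset Printing Implicit Defensive.
Import Order.TTheory GRing.Theory Num.Theory.
Import numFieldNormedType.Exports.
Local Open Scope ring_scope.

Definition Mtot (R : realType) (N : nat) (m : 'rV[R]_N) : R := \sum_(k < N) m 0 k.

(* F(y)_i = M y_i - sum_k m_k y_k - sigma (theta_i - y_i^p) y_i
   (defined on all of R^N via powR; only used at points of the positive orthant) *)
Definition FF (R : realType) (N : nat) (theta m : 'rV[R]_N) (sigma p : R)
  (y : 'rV[R]_N) : 'rV[R]_N :=
  \row_(i < N) (Mtot m * y 0 i - \sum_(k < N) m 0 k * y 0 k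
                - sigma * (theta 0 i - y 0 i `^ p) * y 0 i).

Definition dd (R : realType) (N : nat) (theta m : 'rV[R]_N) (sigma p : R)
  (y : 'rV[R]_N) (i : 'I_N) : R :=
  Mtot m + sigma * (p + 1) * y 0 i `^ p - sigma * theta 0 i.

Definition JF (R : realType) (N : nat) (theta m : 'rV[R]_N) (sigma p : R)
  (y : 'rV[R]_N) : 'M[R]_N :=
  diag_mx (\row_(i < N) dd theta m sigma p y i) - const_mx 1 *m m.

Definition lead_submx (R : ringType) (n k : nat) (hk : (k <= n)%N)
  (A : 'M[R]_n) : 'M[R]_k :=
  \matrix_(i < k, j < k) A (widen_ord hk i) (widen_ord hk j).

(* Linear algebra: by the matrix determinant lemma (Schur complement of a
   bordered matrix) det (diag(d) - 1 u^T) = prod_i d_i * (1 - sum_i u_i/d_i).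
   Hence such a matrix has positive determinant as soon as all d_i > 0 and
   sum_i u_i/d_i < 1; and its leading principal submatrices have the same
   shape with truncated d and u, whose truncated sums are still < 1 when u
   is nonnegative.

   The equilibrium: writing S = sum_k m_k y_k, the equation F(y) = 0 gives
   d_i y_i = S + sigma p y_i^p y_i > S for every i.  Since S >= 0 this forces
   d_i > 0, and weighting by m_k y_k / S it gives sum_k m_k / d_k < 1. *)
From HB Require Import structures.
From mathcomp Require Import all_boot all_order all_algebra.
From mathcomp Require Import all_classical all_reals all_analysis.
From mathcomp Require Import ring.
Set Implicit Arguments. Unset Strict Implicit. Unset Printing Implicit Defensive.
Import Order.TTheory GRing.Theory Num.Theory.
Import numFieldNormedType.Exports.
Local Open Scope ring_scope.

(* Matrix determinant lemma for a diagonal matrix minus the rank-one matrix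
   1 u^T, proved by computing the determinant of the bordered matrix
   [[1, u], [1, diag d]] through its two block LU factorizations. *)
Lemma det_diag_sub_rank1 (F : fieldType) (n : nat) (d u : 'rV[F]_n) :
  (forall i, d 0 i != 0) ->
  \det (diag_mx d - const_mx 1 *m u)
    = \prod_i d 0 i * (1 - \sum_i u 0 i / d 0 i).
Proof.
move=> d_neq0.
pose c : 'cV[F]_n := const_mx 1.
pose w : 'cV[F]_n := \col_i (d 0 i)^-1.
pose B : 'M[F]_(1 + n) := block_mx 1 u c (diag_mx d).
have dw : diag_mx d *m w = c.
  by apply/matrixP=> i j; rewrite mul_diag_mx !mxE mulfV.
have B_lower : B = block_mx 1 0 c 1 *m block_mx 1 u 0 (diag_mx d - c *m u).
  by rewrite mulmx_block !mul1mx !mul0mx !mulmx1 !addr0 addrC subrK.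
have B_upper : B = block_mx (1 - u *m w) u 0 (diag_mx d) *m block_mx 1 0 w 1.
  by rewrite mulmx_block !mulmx1 !mulmx0 !add0r dw subrK.
have := congr1 determinant (etrans (esym B_lower) B_upper).
rewrite !det_mulmx !det_lblock !det_ublock !det1 det_diag !mul1r mulr1 => ->.
rewrite det_mx11 mulrC !mxE eqxx mulr1n; congr (_ * (_ - _)).
by apply: eq_bigr => i _; rewrite !mxE.
Qed.

Lemma det_diag_sub_rank1_gt0 (R : realFieldType) (n : nat) (d u : 'rV[R]_n) :
  (forall i, 0 < d 0 i) -> \sum_i u 0 i / d 0 i < 1 ->
  0 < \det (diag_mx d - const_mx 1 *m u).
Proof.
move=> d_gt0 sum_lt1; rewrite det_diag_sub_rank1 => [|i]; last by rewrite gt_eqF.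
by rewrite mulr_gt0 ?subr_gt0 // prodr_gt0.
Qed.

Lemma lead_submx_diag_sub_rank1 (R : nzRingType) (n k : nat) (hk : (k <= n)%N)
    (d u : 'rV[R]_n) :
  lead_submx hk (diag_mx d - const_mx 1 *m u)
    = diag_mx (\row_i d 0 (widen_ord hk i))
      - const_mx 1 *m \row_i u 0 (widen_ord hk i).
Proof.
by apply/matrixP=> i j; rewrite !mxE !big_ord1 !mxE.
Qed.

Lemma sum_prefix_le (R : numDomainType) (n k : nat) (hk : (k <= n)%N)
    (F : 'I_n -> R) :
  (forall i, 0 <= F i) -> \sum_(i < k) F (widen_ord hk i) <= \sum_(i < n) F i.
Proof.
move=> F_ge0; rewrite -(big_ord_narrow (F := F) hk).
by rewrite [leRHS](bigID (fun i : 'I_n => (i < k)%N)) lerDl sumr_ge0.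
Qed.

(* If each d_k y_k strictly exceeds the total S = sum_l m_l y_l, then the
   weights m_k / d_k sum to less than 1: indeed m_k / d_k < m_k y_k / S. *)
Lemma sum_weights_lt1 (R : realFieldType) (n : nat) (m y d : 'I_n -> R) :
  (forall k, 0 < m k) -> (forall k, 0 < y k) ->
  (forall k, \sum_l m l * y l < d k * y k) ->
  \sum_k m k / d k < 1.
Proof.
move=> m_gt0 y_gt0 S_lt.
have [k0 _|no_index] := pickP (fun _ : 'I_n => true); last first.
  by rewrite big1 ?ltr01 // => k; have := no_index k.
set S := \sum_l m l * y l.
have S_gt0 : 0 < S.
  rewrite /S (bigD1 k0) //= ltr_pwDl ?mulr_gt0 // sumr_ge0 // => l _.
  by rewrite mulr_ge0 ?ltW.
have d_gt0 k : 0 < d k by rewrite -(pmulr_lgt0 _ (y_gt0 k)) (lt_trans S_gt0).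
apply: (@lt_le_trans _ _ (\sum_k m k * y k / S)); last first.
  by rewrite -mulr_suml divff ?gt_eqF.
apply: ltr_sum; first by apply/hasP; exists k0; rewrite ?mem_index_enum.
move=> k _; rewrite ltr_pdivlMr //.
have -> : m k * y k = m k / d k * (d k * y k).
  by rewrite mulrA divfK ?lt0r_neq0.
by rewrite ltr_pM2l ?divr_gt0.
Qed.

Lemma is_derive_along_line (R : realType) (V W : normedModType R) (f : V -> W)
    (x v : V) (df : W) :
  is_derive (0 : R) 1 (fun h : R => f (h *: v + x)) df -> is_derive x v f df.
Proof.
case=> f_derivable f_derive; split; first exact/derivable1P.
rewrite -f_derive /derive; set quot_f := fun h => h^-1 *: _.
set quot_line := fun h => h^-1 *: _; suff -> : quot_f = quot_line by [].
rewrite funeqE /quot_f /quot_line => h /=.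
by rewrite addr0 scale0r add0r [_%:A]mulr1.
Qed.

Lemma powR_pred_mul {R : realType} (p : R) {x : R} :
  0 < x -> x `^ (p - 1) * x = x `^ p.
Proof.
move=> x_gt0; rewrite powRB; last by rewrite (gt_eqF x_gt0) implybT.
by rewrite powRr1 ?ltW // divfK // gt_eqF.
Qed.

Lemma is_derive_powR_line {R : realType} (c p : R) {y : R} : 0 < y ->
  is_derive (0 : R) 1 (fun t => (t * c + y) `^ p) (p * y `^ (p - 1) * c).
Proof.
move=> y_gt0.
have line : is_derive (0 : R) 1 (fun t => t * c + y) c.
  by apply: is_derive_eq; rewrite scale0r add0r addr0 [_%:A]mulr1.
have pow : is_derive (0 * c + y) 1 (fun z : R => z `^ p) (p * y `^ (p - 1)).
  by rewrite mul0r add0r; exact: is_derive1_powR.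
by have := is_derive1_comp (g := fun t => t * c + y) pow line.
Qed.

Section Equilibrium.
Variables (R : realType) (N : nat) (theta m : 'rV[R]_N) (sigma p : R).
Implicit Types (y : 'rV[R]_N) (i j : 'I_N).

Definition moment y : R := \sum_(k < N) m 0 k * y 0 k.

Lemma FF_coord_line y i j (h : R) :
  FF theta m sigma p (h *: delta_mx 0 j + y) 0 i
  = Mtot m * (h * (i == j)%:R + y 0 i) - (h * m 0 j + moment y)
    - sigma * (theta 0 i - (h * (i == j)%:R + y 0 i) `^ p)
      * (h * (i == j)%:R + y 0 i).
Proof.
rewrite /FF /moment !mxE eqxx /=; congr (_ - (_ : R) - _).
under eq_bigr => k _ do rewrite !mxE eqxx /= mulrDr.
rewrite big_split /= (bigD1 j) //= eqxx mulr1 big1 ?addr0 ?(mulrC h) //.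
by move=> k /negbTE ->; rewrite mulr0 mulr0.
Qed.

Lemma JF_entry y i j :
  JF theta m sigma p y i j = (i == j)%:R * dd theta m sigma p y i - m 0 j.
Proof. by rewrite /JF !mxE big_ord1 !mxE mul1r mulr_natl. Qed.

Lemma is_derive_FF y i j : (forall k, 0 < y 0 k) ->
  is_derive y (delta_mx 0 j : 'rV[R]_N) (fun z => FF theta m sigma p z 0 i)
    (JF theta m sigma p y i j).
Proof.
move=> y_gt0; apply: is_derive_along_line.
rewrite (funext (FF_coord_line y i j)).
have pow_line := is_derive_powR_line (i == j)%:R p (y_gt0 i).
apply: is_derive_eq; rewrite JF_entry /dd !scale0r !mul0r !add0r !addr0.
rewrite -(powR_pred_mul p (y_gt0 i)) ![_%:A]mulr1 /GRing.scale /=.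
ring.
Qed.

Lemma FF_eq0_balance y i : FF theta m sigma p y = 0 ->
  dd theta m sigma p y i * y 0 i = moment y + sigma * p * y 0 i `^ p * y 0 i.
Proof.
move=> /(congr1 (fun F : 'rV[R]_N => F 0 i)); rewrite /FF /dd /moment !mxE.
by move=> F_i0; apply/eqP; rewrite -subr_eq0 -[X in _ == X]F_i0; apply/eqP; ring.
Qed.

Lemma equilibrium_dominates y i :
  0 < sigma -> 0 < p -> (forall k, 0 < y 0 k) -> FF theta m sigma p y = 0 ->
  moment y < dd theta m sigma p y i * y 0 i.
Proof.
move=> sigma_gt0 p_gt0 y_gt0 /(FF_eq0_balance i) ->.
by rewrite ltrDl !mulr_gt0 // powR_gt0.
Qed.

Lemma dd_gt0 y i : (forall k, 0 < m 0 k) -> (forall k, 0 < y 0 k) ->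
  moment y < dd theta m sigma p y i * y 0 i -> 0 < dd theta m sigma p y i.
Proof.
move=> m_gt0 y_gt0 S_lt; rewrite -(pmulr_lgt0 _ (y_gt0 i)).
apply: le_lt_trans S_lt; apply: sumr_ge0 => k _.
by rewrite mulr_ge0 ?ltW.
Qed.
End Equilibrium.

(* The main theorem: at a positive equilibrium the d_i are positive, JF is
   the Jacobian of F, and JF and all its leading principal submatrices have
   positive determinant. *)
Theorem mainTheorem12 (R : realType) (N : nat) (theta m : 'rV[R]_N)
  (sigma p : R) (y : 'rV[R]_N) :
  (forall i, 0 < theta 0 i) -> (forall i, 0 < m 0 i) -> 0 < sigma -> 0 < p ->
  (forall i, 0 < y 0 i) ->
  FF theta m sigma p y = 0 ->
  [/\ (forall i, 0 < dd theta m sigma p y i),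
      (* JF is the Jacobian of FF at y: entry (i,j) = d F_i / d y_j *)
      (forall i j : 'I_N,
         is_derive y (delta_mx 0 j : 'rV[R]_N) (fun z => FF theta m sigma p z 0 i)
                   (JF theta m sigma p y i j)),
      (forall (k : nat) (hk : (1 <= k <= N)%N),
         0 < \det (lead_submx (proj2 (andP hk)) (JF theta m sigma p y))),
      \det (JF theta m sigma p y)
        = (\prod_(i < N) dd theta m sigma p y i)
          * (1 - \sum_(k < N) m 0 k / dd theta m sigma p y k)
    & 0 < \det (JF theta m sigma p y)].
Proof.
move=> _ m_gt0 sigma_gt0 p_gt0 y_gt0 Fy0.
pose d := dd theta m sigma p y.
have dominates i := equilibrium_dominates i sigma_gt0 p_gt0 y_gt0 Fy0.
have d_gt0 i : 0 < d i := dd_gt0 m_gt0 y_gt0 (dominates i).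
have weights_lt1 : \sum_k m 0 k / d k < 1.
  exact: (sum_weights_lt1 (m := fun k => m 0 k) m_gt0 y_gt0 dominates).
split => //.
- by move=> i j; apply: is_derive_FF.
- move=> k hk; rewrite /JF lead_submx_diag_sub_rank1.
  apply: det_diag_sub_rank1_gt0 => [i|]; first by rewrite !mxE d_gt0.
  apply: le_lt_trans weights_lt1; under eq_bigr do rewrite !mxE.
  refine (sum_prefix_le (F := fun i => m 0 i / d i) _ _) => i.
  by rewrite divr_ge0 ?ltW.
- rewrite /JF det_diag_sub_rank1 => [|i]; last by rewrite mxE gt_eqF.
  by congr (_ * (1 - _)); apply: eq_bigr => i _; rewrite mxE.
- rewrite /JF; apply: det_diag_sub_rank1_gt0 => [i|]; first by rewrite mxE.
  by under eq_bigr do rewrite mxE.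
Qed.
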